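(* LFI3 is maximal with respect to LFI1; that is, LFI3 is a proper sublogic of LFI1, and for every formula $\alpha$ such that $\vDash_{LFI1}\alpha$ but $\not\vDash_{LFI3}\alpha$, the logic obtained from LFI3 by adding $\alpha$ as a theorem schema (all of its substitution instances as theorems) coincides with LFI1.
   Context: Formulas are built from a countable set of propositional variables using unary $\neg,\circ$ and binary $\land,\lor,\to$. On $\{0,1\}$ use Boolean $\land,\lor,\to,\sim$. Let $\mathbb{B}=\{x\in\{0,1\}^3: x_1\lor x_2=1,\ x_3\lor\sim(x_1\land x_2)=1\}=\{T,t,b,f,F\}$ with $T=(1,0,0)$, $t=(1,0,1)$, $b=(1,1,1)$, $f=(0,1,1)$, $F=(0,1,0)$. The LFI3 algebra on $\mathbb{B}$ has operations: $a\dot\land b=(a_1\land b_1,\ a_2\lor b_2,\ (\sim a_2\land b_3)\lor(a_3\land\sim b_2)\lor(a_3\land b_3))$; $a\dot\lor b=(a_1\lor b_1,\ a_2\land b_2,\ (\sim a_1\land b_3)\lor(a_3\land\sim b_1)\lor(a_3\land b_3))$; $a\dot\to b=(a_1\to b_1,\ b_2\land(\sim a_2\lor a_3),\ (\sim a_2\land b_3)\lor(\sim a_2\land a_3\land\sim b_1)\lor(a_3\land b_3)\lor(\sim a_1\land a_3\land\sim b_1))$; $\dot\neg a=(a_2,a_1,a_3)$; $\dot\circ a=(\sim(a_1\land a_2),a_3,a_3\land\sim(a_1\land a_2))$. Designated set $D=\{T,t,b\}$; LFI3 is the matrix logic of this algebra with $D$. LFI1 is the three-valued matrix logic on $\{1,\frac12,0\}$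 with designated set $\{1,\frac12\}$, $\land=\min$, $\lor=\max$ (order $0<\frac12<1$), $a\to c=1$ if $a=0$ and $a\to c=c$ otherwise, $\neg1=0$, $\neg\frac12=\frac12$, $\neg0=1$, $\circ1=\circ0=1$, $\circ\frac12=0$. For matrix logics, $\Gamma\vDash\alpha$ means every homomorphic valuation designating all of $\Gamma$ designates $\alpha$; ''sublogic'' means inclusion of consequence relations. *)

From Stdlib Require Import Bool.

Inductive form : Type :=
| Var : nat -> form
| Neg : form -> form
| Circ : form -> form
| And : form -> form -> form
| Or : form -> form -> form
| Imp : form -> form -> form.

Fixpoint subst (s : nat -> form) (a : form) : form :=
  match a with
  | Var p => s p
  | Neg a => Neg (subst s a)
  | Circ a => Circ (subst s a)
  | And a b => And (subst s a) (subst s b)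
  | Or a b => Or (subst s a) (subst s b)
  | Imp a b => Imp (subst s a) (subst s b)
  end.

Definition triple := (bool * bool * bool)%type.
Definition p1 (x : triple) : bool := fst (fst x).
Definition p2 (x : triple) : bool := snd (fst x).
Definition p3 (x : triple) : bool := snd x.
Definition mk (a b c : bool) : triple := (a, b, c).

Definition inB (x : triple) : bool :=
  (p1 x || p2 x) && (p3 x || negb (p1 x && p2 x)).

Definition vT : triple := mk true false false.
Definition vt : triple := mk true false true.
Definition vb : triple := mk true true true.
Definition vf : triple := mk false true true.
Definition vF : triple := mk false true false.

Definition impb (a b : bool) : bool := negb a || b.

Definition andB (a b : triple) : triple :=
  mk (p1 a && p1 b) (p2 a || p2 b)
     ((negb (p2 a) && p3 b) || (p3 a && negb (p2 b)) || (p3 a && p3 b)).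
Definition orB (a b : triple) : triple :=
  mk (p1 a || p1 b) (p2 a && p2 b)
     ((negb (p1 a) && p3 b) || (p3 a && negb (p1 b)) || (p3 a && p3 b)).
Definition impB (a b : triple) : triple :=
  mk (impb (p1 a) (p1 b)) (p2 b && (negb (p2 a) || p3 a))
     ((negb (p2 a) && p3 b) || (negb (p2 a) && p3 a && negb (p1 b))
      || (p3 a && p3 b) || (negb (p1 a) && p3 a && negb (p1 b))).
Definition negB (a : triple) : triple := mk (p2 a) (p1 a) (p3 a).
Definition circB (a : triple) : triple :=
  mk (negb (p1 a && p2 a)) (p3 a) (p3 a && negb (p1 a && p2 a)).

Definition triple_eqb (x y : triple) : bool :=
  Bool.eqb (p1 x) (p1 y) && Bool.eqb (p2 x) (p2 y) && Bool.eqb (p3 x) (p3 y).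

Definition desB (x : triple) : bool :=
  triple_eqb x vT || triple_eqb x vt || triple_eqb x vb.

(* Homomorphic extension of a valuation of the variables into B
   (B is closed under the operations, so this is the homomorphism into B). *)
Fixpoint evalB (v : nat -> triple) (a : form) : triple :=
  match a with
  | Var p => v p
  | Neg a => negB (evalB v a)
  | Circ a => circB (evalB v a)
  | And a b => andB (evalB v a) (evalB v b)
  | Or a b => orB (evalB v a) (evalB v b)
  | Imp a b => impB (evalB v a) (evalB v b)
  end.

Definition cons3 (Gamma : form -> Prop) (a : form) : Prop :=
  forall v : nat -> triple, (forall p, inB (v p) = true) ->
    (forall g, Gamma g -> desB (evalB v g) = true) ->
    desB (evalB v a) = true.

Inductive V3 : Type := one | half | zero.

Definition rank3 (x : V3) : nat := match x with zero => 0 | half => 1 | one => 2 end.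
Definition min3 (x y : V3) : V3 := if Nat.leb (rank3 x) (rank3 y) then x else y.
Definition max3 (x y : V3) : V3 := if Nat.leb (rank3 x) (rank3 y) then y else x.
Definition imp3 (x y : V3) : V3 := match x with zero => one | _ => y end.
Definition neg3 (x : V3) : V3 := match x with one => zero | half => half | zero => one end.
Definition circ3 (x : V3) : V3 := match x with half => zero | _ => one end.
Definition des3 (x : V3) : bool := match x with zero => false | _ => true end.

Fixpoint eval3 (v : nat -> V3) (a : form) : V3 :=
  match a with
  | Var p => v p
  | Neg a => neg3 (eval3 v a)
  | Circ a => circ3 (eval3 v a)
  | And a b => min3 (eval3 v a) (eval3 v b)
  | Or a b => max3 (eval3 v a) (eval3 v b)
  | Imp a b => imp3 (eval3 v a) (eval3 v b)
  end.

Definition cons1 (Gamma : form -> Prop) (a : form) : Prop :=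
  forall v : nat -> V3,
    (forall g, Gamma g -> des3 (eval3 v g) = true) ->
    des3 (eval3 v a) = true.

Definition noprem : form -> Prop := fun _ => False.

Definition sublogic31 : Prop :=
  forall Gamma a, cons3 Gamma a -> cons1 Gamma a.

Definition cons3_plus (alpha : form) (Gamma : form -> Prop) (b : form) : Prop :=
  cons3 (fun g => Gamma g \/ exists s : nat -> form, g = subst s alpha) b.

From Stdlib Require Import Classical.

(** The LFI1 matrix is the submatrix of the LFI3 matrix on {T, b, F}, so every
    LFI1 valuation is an LFI3 valuation and LFI3 is a sublogic of LFI1; it is
    proper because [circ (circ p)] takes the undesignated value [F] at [p = t].
    For maximality, let [alpha] be an LFI1-tautology that LFI3 refutes, and let
    [v] be an LFI3 valuation designating all instances of [alpha].  If some
    formula [q] has value [t] under [v], then every element of B is the value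
    of a formula in [q] alone, so every LFI3 valuation is realised by [v] on a
    substitution instance of [alpha], and [alpha] would be LFI3-valid.  Hence
    no formula takes value [t]; then no variable takes [t] or [f] (as
    [neg f = t]), i.e. [v] is an LFI1 valuation seen through the embedding. *)

Definition of_V3 (x : V3) : triple :=
  match x with one => vT | half => vb | zero => vF end.

Definition to_V3 (x : triple) : V3 :=
  match x with
  | (true, false, false) => one
  | (true, true, true) => half
  | _ => zero
  end.

Lemma of_V3_inB x : inB (of_V3 x) = true.
Proof. now destruct x. Qed.

Lemma desB_of_V3 x : desB (of_V3 x) = des3 x.
Proof. now destruct x. Qed.

Lemma to_V3K x : inB x = true -> x <> vt -> x <> vf -> of_V3 (to_V3 x) = x.
Proof.
  intros Hx Hxt Hxf.
  destruct x as [[[] []] []]; try discriminate; try reflexivity; contradiction.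
Qed.

Lemma evalB_of_V3 u a : evalB (fun p => of_V3 (u p)) a = of_V3 (eval3 u a).
Proof.
  induction a; simpl; try rewrite IHa; try rewrite IHa1, IHa2; [reflexivity
  | now destruct (eval3 u a) | now destruct (eval3 u a)
  | now destruct (eval3 u a1), (eval3 u a2) ..].
Qed.

Lemma evalB_ext v w a : (forall p, v p = w p) -> evalB v a = evalB w a.
Proof. intro Hvw; induction a; simpl; congruence. Qed.

Lemma evalB_subst v s a : evalB v (subst s a) = evalB (fun p => evalB v (s p)) a.
Proof. induction a; simpl; congruence. Qed.

Lemma eval3_subst v s a : eval3 v (subst s a) = eval3 (fun p => eval3 v (s p)) a.
Proof. induction a; simpl; congruence. Qed.

Lemma cons1_subst alpha s : cons1 noprem alpha -> cons1 noprem (subst s alpha).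
Proof.
  intros Halpha u _. rewrite eval3_subst. apply Halpha. intros _ [].
Qed.

Lemma desB_evalB_of_V3 u a : desB (evalB (fun p => of_V3 (u p)) a) = des3 (eval3 u a).
Proof. now rewrite evalB_of_V3, desB_of_V3. Qed.

Lemma cons3_cons1 Gamma Delta b :
  (forall d, Delta d -> cons1 noprem d) ->
  cons3 (fun g => Gamma g \/ Delta g) b -> cons1 Gamma b.
Proof.
  intros HDelta Hb u HGamma. rewrite <- desB_evalB_of_V3. apply Hb.
  - intro p. apply of_V3_inB.
  - intros g [Hg | Hg]; rewrite desB_evalB_of_V3.
    + now apply HGamma.
    + apply (HDelta g Hg). intros _ [].
Qed.

Lemma sublogic31_holds : sublogic31.
Proof.
  intros Gamma b Hb. apply (cons3_cons1 Gamma noprem); [intros _ []|].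
  intros v Hv HGamma. apply Hb; [exact Hv|]. intros g Hg. apply HGamma. now left.
Qed.

Lemma cons1_circ_circ p : cons1 noprem (Circ (Circ (Var p))).
Proof. intros u _. simpl. now destruct (u p). Qed.

Lemma not_cons3_circ_circ p : ~ cons3 noprem (Circ (Circ (Var p))).
Proof.
  intro H. specialize (H (fun _ => vt) (fun _ => eq_refl) (fun _ f => False_ind _ f)).
  discriminate.
Qed.

Definition form_of_value (x : triple) (q : form) : form :=
  match x with
  | (true, false, false) => Neg (Circ (Circ q))
  | (true, false, true) => q
  | (true, true, true) => Circ q
  | (false, true, true) => Neg q
  | _ => Circ (Circ q)
  end.

Lemma evalB_form_of_value v q x :
  evalB v q = vt -> inB x = true -> evalB v (form_of_value x q) = x.
Proof.
  intros Hq Hx.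
  destruct x as [[[] []] []]; try discriminate; simpl; now rewrite Hq.
Qed.

Lemma evalB_subst_form_of_value v w q a :
  evalB v q = vt -> (forall p, inB (w p) = true) ->
  evalB v (subst (fun p => form_of_value (w p) q) a) = evalB w a.
Proof.
  intros Hq Hw. rewrite evalB_subst. apply evalB_ext. intro p.
  now apply evalB_form_of_value.
Qed.

Lemma instances_designated_cons3 v q alpha :
  evalB v q = vt ->
  (forall s, desB (evalB v (subst s alpha)) = true) ->
  cons3 noprem alpha.
Proof.
  intros Hq Hinst w Hw _.
  rewrite <- (evalB_subst_form_of_value v w q alpha Hq Hw). apply Hinst.
Qed.

Lemma evalB_to_V3 v a :
  (forall p, inB (v p) = true) -> (forall q, evalB v q <> vt) ->
  evalB v a = evalB (fun p => of_V3 (to_V3 (v p))) a.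
Proof.
  intros Hv Hnot. apply evalB_ext. intro p. symmetry. apply to_V3K; [apply Hv | |].
  - exact (Hnot (Var p)).
  - intro Hf. apply (Hnot (Neg (Var p))). simpl. now rewrite Hf.
Qed.

Lemma cons1_cons3_plus alpha Gamma b :
  ~ cons3 noprem alpha -> cons1 Gamma b -> cons3_plus alpha Gamma b.
Proof.
  intros Halpha Hb v Hv HGamma.
  destruct (classic (exists q, evalB v q = vt)) as [[q Hq] | Hnot].
  - exfalso. apply Halpha, (instances_designated_cons3 v q); [exact Hq|].
    intro s. apply HGamma. right. now exists s.
  - assert (Hto : forall a, evalB v a = evalB (fun p => of_V3 (to_V3 (v p))) a).
    { intro a. apply evalB_to_V3; [exact Hv|]. intros q Hq. apply Hnot. now exists q. }
    rewrite Hto, desB_evalB_of_V3. apply Hb. intros g Hg.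
    rewrite <- desB_evalB_of_V3, <- Hto. apply HGamma. now left.
Qed.

Theorem theorem14 :
  (sublogic31 /\ (exists (Gamma : form -> Prop) (a : form), cons1 Gamma a /\ ~ cons3 Gamma a))
  /\
  (forall alpha : form,
     cons1 noprem alpha -> ~ cons3 noprem alpha ->
     forall (Gamma : form -> Prop) (b : form),
       cons3_plus alpha Gamma b <-> cons1 Gamma b).
Proof.
  split; [split|].
  - exact sublogic31_holds.
  - exists noprem, (Circ (Circ (Var 0))).
    split; [apply cons1_circ_circ | apply not_cons3_circ_circ].
  - intros alpha Halpha1 Halpha3 Gamma b. split.
    + apply cons3_cons1. intros d [s ->]. now apply cons1_subst.
    + now apply cons1_cons3_plus.
Qed.
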